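(* Two proper subspaces $W_1,W_2$ of $\mathbb{R}^N$ do norm retrieval if and only if they are orthogonal complements of each other, i.e. $W_2=W_1^\perp$.
   Context: A family of subspaces $\{W_i\}_{i=1}^M$ of $\mathbb{R}^N$ with orthogonal projections $\{P_i\}_{i=1}^M$ does norm retrieval if for all $x,y\in\mathbb{R}^N$, $\|P_ix\|=\|P_iy\|$ for all $i\in\{1,\dots,M\}$ implies $\|x\|=\|y\|$. A proper subspace is a subspace different from $\mathbb{R}^N$. *)

(* R^N is modelled as row vectors 'rV[R]_N over an
   arbitrary R : realType (the real numbers).  A subspace of R^N is the
   row space of a square matrix W : 'M[R]_N (mxalgebra convention). *)
From HB Require Import structures.
From mathcomp Require Import all_boot all_order all_algebra.
From mathcomp Require Import reals.
Set Implicit Arguments. Unset Strict Implicit. Unset Printing Implicit Defensive.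
Import Order.TTheory GRing.Theory Num.Theory.
Local Open Scope ring_scope.

Definition dotv (R : realType) (N : nat) (u v : 'rV[R]_N) : R :=
  (u *m v^T) 0 0.
Definition normv (R : realType) (N : nat) (u : 'rV[R]_N) : R :=
  Num.sqrt (dotv u u).

Definition orthproj (R : realType) (N : nat) (W : 'M[R]_N) (x : 'rV[R]_N)
  : 'rV[R]_N :=
  let B := row_base W in x *m B^T *m invmx (B *m B^T) *m B.

Definition orthcomp (R : realType) (N : nat) (W : 'M[R]_N) : 'M[R]_N :=
  kermx W^T.

Definition proper_subspace (R : realType) (N : nat) (W : 'M[R]_N) : bool :=
  ~~ row_full W.

Definition norm_retrieval (R : realType) (N : nat) (I : Type)
  (W : I -> 'M[R]_N) : Prop :=
  forall x y : 'rV[R]_N,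
    (forall i, normv (orthproj (W i) x) = normv (orthproj (W i) y)) ->
    normv x = normv y.

(* If W1 and W2 do norm retrieval, then for e in W1^perp and f in W2^perp the
   vectors e + f and e - f have projections of equal norms, so |e + f| = |e - f|
   and e is orthogonal to f: hence W1^perp <= W2 and W2^perp <= W1.  If z lies in
   W1 and W2, pick e in W1^perp and f in W2^perp of the same norm as z; then e + f
   and z have projections of equal norms, so 2|z|^2 = |e + f|^2 = |z|^2 and z = 0.
   Finally, for w in W2 the vector w - P1 w lies in W1^perp <= W2, so P1 w lies in
   W1 and W2, hence vanishes: W2 is orthogonal to W1, i.e. W2 = W1^perp.
   Conversely, if W2 = W1^perp then P2 = I - P1 and Pythagoras gives
   |x|^2 = |P1 x|^2 + |P2 x|^2. *)
From mathcomp Require Import all_boot all_order all_algebra.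
From mathcomp Require Import reals.
From mathcomp Require Import lra.
Import GRing.Theory Num.Theory.
Local Open Scope ring_scope.
Set Implicit Arguments. Unset Strict Implicit. Unset Printing Implicit Defensive.

Section DotProduct.
Variables (R : realType) (N : nat).
Implicit Types (x y z : 'rV[R]_N) (W : 'M[R]_N).

Lemma dotvE x y : dotv x y = \sum_j x 0 j * y 0 j.
Proof. by rewrite /dotv mxE; apply: eq_bigr => j _; rewrite mxE. Qed.

Lemma dotvC x y : dotv x y = dotv y x.
Proof. by rewrite !dotvE; apply: eq_bigr => j _; rewrite mulrC. Qed.

Lemma dotvDl x y z : dotv (x + y) z = dotv x z + dotv y z.
Proof. by rewrite !dotvE -big_split; apply: eq_bigr => j _; rewrite !mxE mulrDl. Qed.

Lemma dotvDr x y z : dotv x (y + z) = dotv x y + dotv x z.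
Proof. by rewrite dotvC dotvDl !(dotvC x). Qed.

Lemma dotvNl x y : dotv (- x) y = - dotv x y.
Proof. by rewrite !dotvE -sumrN; apply: eq_bigr => j _; rewrite !mxE mulNr. Qed.

Lemma dotvNr x y : dotv x (- y) = - dotv x y.
Proof. by rewrite dotvC dotvNl dotvC. Qed.

Lemma dotvZl (c : R) x y : dotv (c *: x) y = c * dotv x y.
Proof. by rewrite !dotvE mulr_sumr; apply: eq_bigr => j _; rewrite !mxE mulrA. Qed.

Lemma dotvZr (c : R) x y : dotv x (c *: y) = c * dotv x y.
Proof. by rewrite dotvC dotvZl dotvC. Qed.

Lemma dotvv_ge0 x : 0 <= dotv x x.
Proof. by rewrite dotvE; apply: sumr_ge0 => j _; rewrite -expr2 sqr_ge0. Qed.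

Lemma dotvv_eq0 x : dotv x x = 0 -> x = 0.
Proof.
rewrite dotvE => /eqP; rewrite psumr_eq0 => [/allP x2_eq0|j _]; last first.
  by rewrite -expr2 sqr_ge0.
apply/rowP => j; rewrite mxE.
by have := x2_eq0 j (mem_index_enum j); rewrite /= mulf_eq0 orbb => /eqP.
Qed.

Lemma dotvv_add_ortho x y :
  dotv x y = 0 -> dotv (x + y) (x + y) = dotv x x + dotv y y.
Proof. by move=> xy0; rewrite dotvDl !dotvDr xy0 dotvC xy0 addr0 add0r. Qed.

Lemma eq_normv x y : normv x = normv y <-> dotv x x = dotv y y.
Proof.
split=> [|xy]; last by rewrite /normv xy.
by move=> /(congr1 (fun t => t ^+ 2)); rewrite !sqr_sqrtr ?dotvv_ge0.
Qed.

Lemma dotv_ortho m x y (U : 'M[R]_(m, N)) :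
  x *m U^T = 0 -> (y <= U)%MS -> dotv x y = 0.
Proof. by move=> xU0 /submxP [D ->]; rewrite /dotv trmx_mul mulmxA xU0 mul0mx mxE. Qed.

Lemma ortho_submx m n x (V : 'M[R]_(m, N)) (U : 'M[R]_(n, N)) :
  x *m U^T = 0 -> (V <= U)%MS -> x *m V^T = 0.
Proof. by move=> xU0 /submxP [D ->]; rewrite trmx_mul mulmxA xU0 mul0mx. Qed.

Lemma ortho_sub_eq0 m x (U : 'M[R]_(m, N)) : x *m U^T = 0 -> (x <= U)%MS -> x = 0.
Proof. by move=> xU0 xU; apply/dotvv_eq0/(dotv_ortho xU0 xU). Qed.

Lemma exists_ortho_dotvv W (c : R) : ~~ row_full W -> 0 <= c ->
  exists e, e *m W^T = 0 /\ dotv e e = c.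
Proof.
move=> notfullW c_ge0.
have /rowV0Pn [e /sub_kermxP eW0 e_neq0] : kermx W^T != 0.
  rewrite -mxrank_eq0 mxrank_ker mxrank_tr subn_eq0 -ltnNge ltn_neqAle.
  by rewrite notfullW rank_leq_col.
have ee_neq0 : dotv e e != 0 by apply: contraNneq e_neq0 => /dotvv_eq0 ->.
exists (Num.sqrt (c / dotv e e) *: e); split; first by rewrite -scalemxAl eW0 scaler0.
rewrite dotvZl dotvZr mulrA -expr2 sqr_sqrtr ?mulfVK //.
by rewrite divr_ge0 ?dotvv_ge0.
Qed.

End DotProduct.

Section OrthogonalProjection.
Variables (R : realType) (N : nat).
Implicit Types (x y p : 'rV[R]_N) (W : 'M[R]_N).

Lemma row_free_gram_unit r (B : 'M[R]_(r, N)) : row_free B -> B *m B^T \in unitmx.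
Proof.
move=> freeB; rewrite -row_free_unit -kermx_eq0.
apply: contraT => /rowV0Pn [u /sub_kermxP uG0 /eqP[]].
have uB0 : u *m B = 0.
  by apply: dotvv_eq0; rewrite /dotv trmx_mul mulmxA -(mulmxA u) uG0 mul0mx mxE.
by apply/eqP; rewrite -(mulmx_free_eq0 u freeB) uB0.
Qed.

Lemma orthprojE W x : let B := row_base W in
  orthproj W x = x *m (B^T *m invmx (B *m B^T) *m B).
Proof. by rewrite /orthproj !mulmxA. Qed.

Lemma orthprojD W x y : orthproj W (x + y) = orthproj W x + orthproj W y.
Proof. by rewrite !orthprojE mulmxDl. Qed.

Lemma orthprojN W x : orthproj W (- x) = - orthproj W x.
Proof. by rewrite !orthprojE mulNmx. Qed.

Lemma orthproj_sub W x : (orthproj W x <= W)%MS.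
Proof. by rewrite /orthproj (submx_trans (submxMl _ _)) // eq_row_base. Qed.

Lemma orthproj_residual W x : (x - orthproj W x) *m W^T = 0.
Proof.
set B := row_base W; apply: (ortho_submx (U := B)); last by rewrite eq_row_base.
have GB1 : invmx (B *m B^T) *m (B *m B^T) = 1%:M.
  by rewrite mulVmx ?row_free_gram_unit ?row_base_free.
rewrite orthprojE -/B; clearbody B.
by rewrite mulmxBl -!mulmxA GB1 mulmx1 subrr.
Qed.

Lemma orthproj_unique W x p :
  (p <= W)%MS -> (x - p) *m W^T = 0 -> orthproj W x = p.
Proof.
move=> pW xpW0; apply/eqP; rewrite -subr_eq0; apply/eqP.
apply: (ortho_sub_eq0 (U := W)); last by rewrite addmx_sub ?eqmx_opp ?orthproj_sub.
have -> : orthproj W x - p = (x - p) - (x - orthproj W x).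
  by rewrite opprB [RHS]addrC addrA subrK.
by rewrite mulmxBl xpW0 orthproj_residual subrr.
Qed.

Lemma orthproj_id W x : (x <= W)%MS -> orthproj W x = x.
Proof. by move=> xW; apply: orthproj_unique; rewrite // subrr mul0mx. Qed.

Lemma orthproj_ortho W x : x *m W^T = 0 -> orthproj W x = 0.
Proof. by move=> xW0; apply: orthproj_unique; rewrite ?sub0mx ?subr0. Qed.

Lemma dotvv_orthproj W x :
  dotv x x = dotv (orthproj W x) (orthproj W x)
             + dotv (x - orthproj W x) (x - orthproj W x).
Proof.
set p := orthproj W x.
have cross0 : dotv (x - p) p = 0 by exact/dotv_ortho/orthproj_sub/orthproj_residual.
by rewrite -{1 2}(subrK p x) (dotvv_add_ortho cross0) addrC.
Qed.

Lemma orthproj_orthcomp W V x :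
  (V == kermx W^T)%MS -> orthproj V x = x - orthproj W x.
Proof.
case/andP=> /sub_kermxP VW0 kerV; apply: orthproj_unique.
  exact/(submx_trans _ kerV)/sub_kermxP/orthproj_residual.
case/submxP: (orthproj_sub W x) => D PWx; rewrite subKr PWx.
by rewrite -mulmxA -[W]trmxK -trmx_mul VW0 trmx0 mulmx0.
Qed.

End OrthogonalProjection.

Section NormRetrievalPair.
Variables (R : realType) (N : nat).
Implicit Types (x y e f u z w : 'rV[R]_N) (A B : 'M[R]_N).

Definition norm_retrieval2 A B := forall x y,
  dotv (orthproj A x) (orthproj A x) = dotv (orthproj A y) (orthproj A y) ->
  dotv (orthproj B x) (orthproj B x) = dotv (orthproj B y) (orthproj B y) ->
  dotv x x = dotv y y.

Lemma norm_retrieval_bool A B :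
  norm_retrieval (fun i : bool => if i then A else B) <-> norm_retrieval2 A B.
Proof.
split=> nrAB x y => [PAxy PBxy | Pxy].
  by apply/eq_normv/nrAB => -[]; apply/eq_normv.
by apply/eq_normv/nrAB; apply/eq_normv; [apply: (Pxy true) | apply: (Pxy false)].
Qed.

Lemma norm_retrieval2C A B : norm_retrieval2 A B -> norm_retrieval2 B A.
Proof. by move=> nrAB x y PBxy PAxy; apply: nrAB. Qed.

Lemma norm_retrieval2_ortho A B e f : norm_retrieval2 A B ->
  e *m A^T = 0 -> f *m B^T = 0 -> dotv e f = 0.
Proof.
move=> nrAB eA0 fB0.
have := nrAB (e + f) (e - f).
rewrite !orthprojD !orthprojN (orthproj_ortho eA0) (orthproj_ortho fB0).
rewrite !add0r !addr0 oppr0 addr0 dotvNl !dotvNr opprK => /(_ erefl erefl).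
rewrite !dotvDl !dotvDr !dotvNl !dotvNr (dotvC f e).
lra.
Qed.

Lemma norm_retrieval2_orthcomp_sub A B u : norm_retrieval2 A B ->
  u *m A^T = 0 -> (u <= B)%MS.
Proof.
move=> nrAB uA0; set r := u - orthproj B u.
have rB0 : r *m B^T = 0 by apply: orthproj_residual.
have ur0 : dotv u r = 0 by apply: (norm_retrieval2_ortho nrAB).
have PBur0 : dotv (orthproj B u) r = 0 by rewrite dotvC (dotv_ortho rB0) ?orthproj_sub.
have /dotvv_eq0/eqP : dotv r r = 0 by rewrite {1}/r dotvDl dotvNl ur0 PBur0 subrr.
by rewrite subr_eq0 => /eqP ->; apply: orthproj_sub.
Qed.

Lemma norm_retrieval2_cap_eq0 A B z : norm_retrieval2 A B ->
  ~~ row_full A -> ~~ row_full B -> (z <= A)%MS -> (z <= B)%MS -> z = 0.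
Proof.
move=> nrAB notfullA notfullB zA zB.
have [e [eA0 ee]] := exists_ortho_dotvv notfullA (dotvv_ge0 z).
have [f [fB0 ff]] := exists_ortho_dotvv notfullB (dotvv_ge0 z).
have eB := norm_retrieval2_orthcomp_sub nrAB eA0.
have fA := norm_retrieval2_orthcomp_sub (norm_retrieval2C nrAB) fB0.
have ef0 := norm_retrieval2_ortho nrAB eA0 fB0.
have := nrAB (e + f) z.
rewrite !orthprojD (orthproj_ortho eA0) (orthproj_ortho fB0) !orthproj_id //.
rewrite add0r addr0 dotvv_add_ortho // => /(_ ff ee).
by rewrite ee ff => /eqP; rewrite -subr_eq0 addrK => /eqP/dotvv_eq0.
Qed.

Lemma norm_retrieval2_sub_orthcomp A B w : norm_retrieval2 A B ->
  ~~ row_full A -> ~~ row_full B -> (w <= B)%MS -> w *m A^T = 0.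
Proof.
move=> nrAB notfullA notfullB wB.
have resB : (w - orthproj A w <= B)%MS.
  exact/(norm_retrieval2_orthcomp_sub nrAB)/orthproj_residual.
have PAwB : (orthproj A w <= B)%MS.
  by rewrite -[orthproj A w](subKr w) addmx_sub ?eqmx_opp.
have PAw0 := norm_retrieval2_cap_eq0 nrAB notfullA notfullB (orthproj_sub A w) PAwB.
by have := orthproj_residual A w; rewrite PAw0 subr0.
Qed.

Lemma norm_retrieval2_orthcomp A B : norm_retrieval2 A B ->
  ~~ row_full A -> ~~ row_full B -> (B == kermx A^T)%MS.
Proof.
move=> nrAB notfullA notfullB; apply/andP; split; apply/row_subP => i.
  exact/sub_kermxP/(norm_retrieval2_sub_orthcomp nrAB notfullA notfullB)/row_sub.
exact/(norm_retrieval2_orthcomp_sub nrAB)/sub_kermxP/row_sub.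
Qed.

Lemma orthcomp_norm_retrieval2 A B : (B == kermx A^T)%MS -> norm_retrieval2 A B.
Proof.
move=> BAperp x y PAxy PBxy.
rewrite (dotvv_orthproj A x) (dotvv_orthproj A y).
by rewrite -!(orthproj_orthcomp _ BAperp) PAxy PBxy.
Qed.

End NormRetrievalPair.

Theorem mainTheorem2 (R : realType) (N : nat) (W1 W2 : 'M[R]_N) :
  proper_subspace W1 -> proper_subspace W2 ->
  (norm_retrieval (fun i : bool => if i then W1 else W2) <->
   (W2 == orthcomp W1)%MS).
Proof.
move=> properW1 properW2; rewrite norm_retrieval_bool; split=> [nrW|].
  exact: norm_retrieval2_orthcomp.
exact: orthcomp_norm_retrieval2.
Qed.
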